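(* Let $(V,\mathcal H,\iota,W)$ be a generalized functional theory and $k$ a positive integer. Let $\bar{\mathcal F}_p$ be the pure functional of the $k$-convexified theory $(V,\mathcal H\otimes\mathbb C^k,\bar\iota,W\otimes\mathbb 1)$, where $\bar\iota(v)=\iota(v)\otimes\mathbb 1$. Then $\mathrm{conv}_k(\mathcal F_p)=\bar{\mathcal F}_p$.
   Context: A generalized functional theory is a tuple $(V,\mathcal H,\iota,W)$ with $V$ a finite-dimensional real vector space, $\mathcal H$ a finite-dimensional complex Hilbert space, $\iota:V\to i\mathfrak u(\mathcal H)$ linear into the Hermitian operators, $W$ Hermitian. Density operators are regarded as linear functionals via the trace pairing, and $\iota^*$ is the dual map. The pure functional of such a theory is $\mathcal F_p(\rho)=\min\{\langle\Psi|W|\Psi\rangle:\|\Psi\|=1,\iota^*(|\Psi\rangle\langle\Psi|)=\rho\}$, defined on the set $\iota^*(\mathcal P)$ of images of pure states; $\bar{\mathcal F}_p$ is defined analogously with $\mathcal H\otimes\mathbb C^k$, $\bar\iota$, $W\otimes\mathbb 1$. For $f:X\to\mathbb R$, $\mathrm{conv}_k(X)=\{\sum_{i=1}^kt_is_i:s_i\in X,t_i\ge0,\sum t_i=1\}$ and $\mathrm{conv}_k(f):\mathrm{conv}_k(X)\to\mathbb R$, $s\mapsto\inf\{\sum_{i=1}^kt_if(s_i):\sum_it_is_i=s, s_i\in X,t_i\ge0,\sum t_i=1\}$. *)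

From HB Require Import structures.
From mathcomp Require Import all_boot all_order all_algebra.
From mathcomp Require Import all_classical all_reals.
From mathcomp Require Import complex mxtens.

Set Implicit Arguments.
Unset Strict Implicit.
Unset Printing Implicit Defensive.

Import Order.TTheory GRing.Theory Num.Theory.
Local Open Scope ring_scope.
Local Open Scope classical_set_scope.

Definition adjmx (R : rcfType) (p q : nat) (A : 'M[R[i]]_(p, q)) : 'M[R[i]]_(q, p) :=
  map_mx Num.conj (A^T).

Definition is_hermitian (R : rcfType) (n : nat) (A : 'M[R[i]]_n) : Prop := adjmx A = A.

Definition unit_vec (R : rcfType) (n : nat) (psi : 'cV[R[i]]_n) : Prop :=
  (adjmx psi *m psi) 0 0 = 1.

Definition proj (R : rcfType) (n : nat) (psi : 'cV[R[i]]_n) : 'M[R[i]]_n :=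
  psi *m adjmx psi.

(* V = R^m with standard basis e_j; iota is determined by A j = iota(e_j),
   iota(v) = sum_j v_j A j.  The dual map iota^*(rho) : V -> R, v |-> tr(rho iota(v)),
   is recorded by its coordinates in the dual basis: (tr(rho A j))_j
   (these traces are real for rho, A j Hermitian; we take the real part). *)
Definition iota_star (R : rcfType) (n m : nat) (A : 'I_m -> 'M[R[i]]_n)
  (rho : 'M[R[i]]_n) : 'rV[R]_m :=
  \row_j complex.Re (\tr (rho *m A j)).

Definition pure_dom (R : rcfType) (n m : nat) (A : 'I_m -> 'M[R[i]]_n) : set 'rV[R]_m :=
  [set s | exists psi : 'cV[R[i]]_n, unit_vec psi /\ iota_star A (proj psi) = s].

Definition expect (R : rcfType) (n : nat) (W : 'M[R[i]]_n) (psi : 'cV[R[i]]_n) : R :=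
  complex.Re ((adjmx psi *m W *m psi) 0 0).

(* pure functional F_p(rho) = min { <psi|W|psi> : ||psi|| = 1, iota^*(|psi><psi|) = rho },
   written as an infimum (meaningful on pure_dom A). *)
Definition Fp (R : realType) (n m : nat) (A : 'I_m -> 'M[R[i]]_n) (W : 'M[R[i]]_n)
  (rho : 'rV[R]_m) : R :=
  inf [set expect W psi | psi in [set psi : 'cV[R[i]]_n | unit_vec psi /\ iota_star A (proj psi) = rho]].

Definition convk_dom (R : realType) (m k : nat) (X : set 'rV[R]_m) : set 'rV[R]_m :=
  [set s | exists (t : 'I_k -> R) (x : 'I_k -> 'rV[R]_m),
     (forall i, X (x i)) /\ (forall i, 0 <= t i) /\ \sum_i t i = 1 /\
     s = \sum_i t i *: x i].

Definition convk_fun (R : realType) (m k : nat) (X : set 'rV[R]_m)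
  (f : 'rV[R]_m -> R) (s : 'rV[R]_m) : R :=
  inf [set y | exists (t : 'I_k -> R) (x : 'I_k -> 'rV[R]_m),
     (forall i, X (x i)) /\ (forall i, 0 <= t i) /\ \sum_i t i = 1 /\
     s = \sum_i t i *: x i /\ y = \sum_i t i * f (x i)].

(* k-convexified theory: H (x) C^k = C^(n*k), iotabar(v) = iota(v) (x) 1, W (x) 1 *)
Definition bar_iota (R : rcfType) (n m k : nat) (A : 'I_m -> 'M[R[i]]_n)
  : 'I_m -> 'M[R[i]]_(n * k) := fun j => A j *t (1%:M : 'M[R[i]]_k).

Definition bar_W (R : rcfType) (n k : nat) (W : 'M[R[i]]_n) : 'M[R[i]]_(n * k) :=
  W *t (1%:M : 'M[R[i]]_k).

From Pilot Require Import Defs.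
From HB Require Import structures.
From mathcomp Require Import all_boot all_order all_algebra.
From mathcomp Require Import all_classical all_reals.
From mathcomp Require Import complex mxtens.
From mathcomp Require Import ring.

Set Implicit Arguments.
Unset Strict Implicit.

Import Order.TTheory GRing.Theory Num.Theory.
Local Open Scope ring_scope.
Local Open Scope classical_set_scope.

(* A vector Psi of C^n (x) C^k is a sum of blocks Psi_i (x) e_i, and for every
   M the expectation of M (x) 1 in Psi is the sum of the expectations of M in
   the blocks Psi_i.  Writing Psi_i = sqrt(t_i) phi_i with phi_i normalised,
   a normalised Psi is exactly a convex combination, with k weights t_i, of k
   pure states phi_i: its image under iotabar is sum_i t_i iota^*(phi_i) and
   its energy is sum_i t_i <phi_i|W|phi_i>.  Hence the pure domain of the
   convexified theory is conv_k of the pure domain, and minimising the energy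
   over Psi amounts to first minimising over each phi_i in its fibre (giving
   F_p) and then over the convex decompositions (giving conv_k F_p).  All
   infima involved are finite because <psi|W|psi> is bounded on unit vectors. *)

Section QuadraticForm.
Variable R : rcfType.
Local Notation C := R[i].

Definition qform n (M : 'M[C]_n) (psi : 'cV[C]_n) : C := (adjmx psi *m M *m psi) 0 0.

Lemma qformE n (M : 'M[C]_n) psi :
  qform M psi = \sum_a \sum_b (psi a 0)^* * M a b * psi b 0.
Proof.
rewrite /qform mxE exchange_big /=; apply: eq_bigr => b _.
rewrite mxE mulr_suml; apply: eq_bigr => a _.
by rewrite /adjmx !mxE.
Qed.

Lemma unit_vecE n (psi : 'cV[C]_n) : unit_vec psi <-> qform 1%:M psi = 1.
Proof. by rewrite /unit_vec /qform mulmx1. Qed.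

Lemma mxtrace_proj n (M : 'M[C]_n) psi : \tr (Defs.proj psi *m M) = qform M psi.
Proof.
rewrite qformE /mxtrace exchange_big /=; apply: eq_bigr => b _.
rewrite mxE; apply: eq_bigr => a _.
by rewrite /Defs.proj !mxE big_ord1 /adjmx !mxE [RHS]mulrC mulrA.
Qed.

Lemma qformZr n (M : 'M[C]_n) (s : R) psi :
  qform M (s%:C%C *: psi) = (s * s)%:C%C * qform M psi.
Proof.
rewrite !qformE mulr_sumr; apply: eq_bigr => a _.
rewrite mulr_sumr; apply: eq_bigr => b _.
rewrite !mxE rmorphM /= conj_Creal ?complex_real //; ring.
Qed.

Lemma qform1E n (psi : 'cV[C]_n) : qform 1%:M psi = \sum_a (psi a 0)^* * psi a 0.
Proof. by rewrite /qform mulmx1 mxE; apply: eq_bigr => a _; rewrite /adjmx !mxE. Qed.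

Lemma qform1_ge0 n (psi : 'cV[C]_n) : 0 <= qform 1%:M psi.
Proof. by rewrite qform1E; apply: sumr_ge0 => a _; rewrite mulrC mul_conjC_ge0. Qed.

Lemma qform1_real n (psi : 'cV[C]_n) : qform 1%:M psi = (complex.Re (qform 1%:M psi))%:C%C.
Proof. by rewrite RRe_real // ger0_real // qform1_ge0. Qed.

Lemma qform1_eq0 n (psi : 'cV[C]_n) : qform 1%:M psi = 0 -> psi = 0.
Proof.
rewrite qform1E => /psumr_eq0P psi0; apply/matrixP => a b; rewrite [b]ord1 mxE.
have /eqP := psi0 (fun a _ => ltac:(by rewrite mulrC mul_conjC_ge0)) a isT.
by rewrite mulf_eq0 conjC_eq0 orbb => /eqP.
Qed.

Lemma unit_vec_normalize n (psi : 'cV[C]_n) : 0 < complex.Re (qform 1%:M psi) ->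
  exists2 phi, unit_vec phi &
    psi = (Num.sqrt (complex.Re (qform 1%:M psi)))%:C%C *: phi.
Proof.
have := qform1_real psi; move: (complex.Re _) => t psi_t t_gt0.
set s := Num.sqrt t; have s_gt0 : 0 < s by rewrite sqrtr_gt0.
have ss : s * s = t by rewrite -expr2 sqr_sqrtr // ltW.
exists (s^-1%:C%C *: psi).
  apply/unit_vecE; rewrite qformZr psi_t -rmorphM /= -ss.
  by rewrite mulrACA mulVf ?gt_eqF // mulr1 rmorph1.
apply/matrixP => a b; rewrite !mxE mulrA -rmorphM /= mulfV ?gt_eqF //.
(* [1%:C] is the unit of [C] only up to unfolding, so [mul1r] cannot rewrite it. *)
exact/esym/mul1r.
Qed.

Lemma unit_vec_scale n (psi phi0 : 'cV[C]_n) : unit_vec phi0 ->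
  exists2 phi, unit_vec phi &
    psi = (Num.sqrt (complex.Re (qform 1%:M psi)))%:C%C *: phi.
Proof.
move=> phi0_unit; have := qform1_ge0 psi; rewrite [X in 0 <= X]qform1_real lecR.
rewrite le_eqVlt => /predU1P[t0 | ]; last exact: unit_vec_normalize.
exists phi0 => //; rewrite -t0 sqrtr0 scale0r.
by apply: qform1_eq0; rewrite qform1_real -t0.
Qed.

Lemma unit_vec_coord_le1 n (psi : 'cV[C]_n) a : unit_vec psi -> `|psi a 0| <= 1.
Proof.
move=> /unit_vecE psi_unit; rewrite -(@expr_le1 _ 2) // normCKC -psi_unit.
rewrite qform1E (bigD1 a) //= lerDl.
by apply: sumr_ge0 => b _; rewrite mulrC mul_conjC_ge0.
Qed.

Lemma qform_unit_vec_bounded n (M : 'M[C]_n) :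
  exists B : R, forall psi, unit_vec psi -> - B <= complex.Re (qform M psi).
Proof.
pose B : C := \sum_a \sum_b `|M a b|.
have B_ge0 : 0 <= B by apply: sumr_ge0 => a _; apply: sumr_ge0.
exists (complex.Re B) => psi psi_unit.
have qM_le : `|qform M psi| <= B.
  rewrite qformE; apply: le_trans (ler_norm_sum _ _ _) _.
  apply: ler_sum => a _; apply: le_trans (ler_norm_sum _ _ _) _.
  apply: ler_sum => b _; rewrite !normrM norm_conjC.
  rewrite -[leRHS]mul1r -[leRHS]mulr1 ler_pM ?mulr_ge0 ?unit_vec_coord_le1 //.
  by rewrite ler_wpM2r ?unit_vec_coord_le1.
apply: lerNnormlW; rewrite -lecR (RRe_real (ger0_real B_ge0)).
exact: le_trans (normc_ge_Re _) qM_le.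
Qed.

End QuadraticForm.

Section TensorBlocks.
Variable R : rcfType.
Local Notation C := R[i].

Definition tens_block n k (Psi : 'cV[C]_(n * k)) (i : 'I_k) : 'cV[C]_n :=
  \col_a Psi (mxtens_index (a, i)) 0.

Definition tens_glue n k (psi : 'I_k -> 'cV[C]_n) : 'cV[C]_(n * k) :=
  \col_p psi (mxtens_unindex p).2 (mxtens_unindex p).1 0.

Lemma tens_glueK n k (psi : 'I_k -> 'cV[C]_n) i : tens_block (tens_glue psi) i = psi i.
Proof. by apply/matrixP => a b; rewrite !mxE mxtens_indexK [b]ord1. Qed.

Lemma sum_mxtens_index n k (F : 'I_(n * k) -> C) :
  \sum_p F p = \sum_a \sum_(i < k) F (mxtens_index (a, i)).
Proof.
rewrite (reindex (@mxtens_index n k)) /=; last first.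
  by exists (@mxtens_unindex n k) => x _; [apply: mxtens_indexK | apply: mxtens_unindexK].
by rewrite pair_big /=; apply: eq_bigr => -[a i].
Qed.

Lemma qform_tens1 n k (M : 'M[C]_n) (Psi : 'cV[C]_(n * k)) :
  qform (M *t 1%:M) Psi = \sum_i qform M (tens_block Psi i).
Proof.
rewrite qformE sum_mxtens_index.
under eq_bigr => a _ do under eq_bigr => i _ do rewrite sum_mxtens_index.
rewrite exchange_big /=; apply: eq_bigr => i _.
rewrite qformE; apply: eq_bigr => a _; rewrite exchange_big /=.
rewrite (bigD1 i) //= [X in _ + X]big1 ?addr0 => [|j ji]; last first.
  by apply: big1 => b _; rewrite tensmxE mxE eq_sym (negbTE ji) mulr0 mulr0 mul0r.
by apply: eq_bigr => b _; rewrite tensmxE !mxE eqxx mulr1.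
Qed.

Lemma tens1mx1 n k : (1%:M : 'M[C]_n) *t (1%:M : 'M[C]_k) = 1%:M.
Proof.
apply/matrixP => p q.
case: (mxtens_indexP p) => a i; case: (mxtens_indexP q) => b j.
rewrite tensmxE !mxE (inj_eq (can_inj (@mxtens_indexK _ _))) xpair_eqE.
by case: (a == b); case: (i == j); rewrite ?mulr1 ?mulr0 ?mul0r.
Qed.

(* [Psi] is the convex combination [sum_i t_i |phi_i><phi_i|] of pure states as
   far as observables of the form [M (x) 1] can tell. *)
Definition tens_mixture n k (Psi : 'cV[C]_(n * k)) (t : 'I_k -> R)
    (phi : 'I_k -> 'cV[C]_n) :=
  forall M, qform (M *t 1%:M) Psi = \sum_i (t i)%:C%C * qform M (phi i).

Lemma tens_mixture_glue n k (t : 'I_k -> R) (phi : 'I_k -> 'cV[C]_n) :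
  (forall i, 0 <= t i) -> \sum_i t i = 1 -> (forall i, unit_vec (phi i)) ->
  exists2 Psi, unit_vec Psi & tens_mixture Psi t phi.
Proof.
move=> t_ge0 t_sum1 phi_unit.
have mix : tens_mixture (tens_glue (fun i => (Num.sqrt (t i))%:C%C *: phi i)) t phi.
  move=> M; rewrite qform_tens1; apply: eq_bigr => i _.
  by rewrite tens_glueK qformZr -expr2 sqr_sqrtr.
exists (tens_glue (fun i => (Num.sqrt (t i))%:C%C *: phi i)) => //.
apply/unit_vecE; rewrite -tens1mx1 mix.
under eq_bigr => i _ do rewrite (proj1 (unit_vecE _) (phi_unit i)) mulr1.
by rewrite -rmorph_sum /= t_sum1.
Qed.

Lemma tens_mixture_decomp n k (Psi : 'cV[C]_(n * k)) : unit_vec Psi ->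
  exists t : 'I_k -> R, exists phi : 'I_k -> 'cV[C]_n,
  [/\ (forall i, 0 <= t i), \sum_i t i = 1, (forall i, unit_vec (phi i)) &
      tens_mixture Psi t phi].
Proof.
move=> /unit_vecE Psi_unit.
pose t i := complex.Re (qform 1%:M (tens_block Psi i)).
have t_ge0 i : 0 <= t i by rewrite -lecR -qform1_real qform1_ge0.
have t_sum1 : \sum_i t i = 1.
  apply: complexI; rewrite rmorph_sum /=.
  by under eq_bigr do rewrite -qform1_real; rewrite -qform_tens1 tens1mx1 Psi_unit.
have [i0 t_i0] : exists i0, 0 < t i0.
  apply: contrapT => no_pos; suff : \sum_i t i <= 0 by rewrite t_sum1 ler10.
  by apply: sumr_le0 => i _; rewrite leNgt; apply/negP => ?; apply: no_pos; exists i.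
have [phi0 phi0_unit _] := unit_vec_normalize t_i0.
have /choice[phi phiP] : forall i, exists phi, unit_vec phi /\
    tens_block Psi i = (Num.sqrt (t i))%:C%C *: phi.
  by move=> i; have [phi ? ?] := unit_vec_scale (tens_block Psi i) phi0_unit; exists phi.
exists t, phi; split => // [i | M]; first by case: (phiP i).
rewrite qform_tens1; apply: eq_bigr => i _.
by case: (phiP i) => _ ->; rewrite qformZr -expr2 sqr_sqrtr.
Qed.

End TensorBlocks.

Section RealParts.
Variable R : rcfType.
Local Notation C := R[i].

Lemma expectE n (W : 'M[C]_n) psi : expect W psi = complex.Re (qform W psi).
Proof. by []. Qed.

Lemma iota_star_proj n m (A : 'I_m -> 'M[C]_n) psi :
  iota_star A (Defs.proj psi) = \row_j complex.Re (qform (A j) psi).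
Proof. by apply/matrixP => a j; rewrite !mxE mxtrace_proj. Qed.

Lemma Re_sum_scale k (t : 'I_k -> R) (z : 'I_k -> C) :
  complex.Re (\sum_i (t i)%:C%C * z i) = \sum_i t i * complex.Re (z i).
Proof.
elim/big_rec2: _ => [|i y w _ <-] //.
by case: (z i) => a b; case: w => c d /=; rewrite mul0r subr0.
Qed.

Lemma tens_mixture_iota_star n m k (A : 'I_m -> 'M[C]_n) Psi t phi :
  tens_mixture Psi t phi ->
  iota_star (bar_iota k A) (Defs.proj Psi) = \sum_i t i *: iota_star A (Defs.proj (phi i)).
Proof.
move=> mix; apply/matrixP => a j.
rewrite iota_star_proj !mxE summxE mix Re_sum_scale.
by apply: eq_bigr => i _; rewrite iota_star_proj !mxE.
Qed.

Lemma tens_mixture_expect n k (W : 'M[C]_n) Psi t phi :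
  tens_mixture Psi t phi -> expect (bar_W k W) Psi = \sum_i t i * expect W (phi i).
Proof. by move=> mix; rewrite expectE mix Re_sum_scale. Qed.

End RealParts.

Section PureFunctional.
Variables (R : realType) (n m : nat) (A : 'I_m -> 'M[R[i]]_n) (W : 'M[R[i]]_n).

Let fibre_energies x :=
  [set expect W psi | psi in [set psi | unit_vec psi /\ iota_star A (Defs.proj psi) = x]].

Lemma Fp_le_expect psi : unit_vec psi -> Fp A W (iota_star A (Defs.proj psi)) <= expect W psi.
Proof.
move=> psi_unit; have [B B_le] := qform_unit_vec_bounded W.
apply: (@ge_inf _ (fibre_energies _)); last by exists psi.
by exists (- B) => _ [phi [phi_unit _] <-]; apply: B_le.
Qed.

Lemma le_Fp c x : pure_dom A x ->
  (forall psi, unit_vec psi -> iota_star A (Defs.proj psi) = x -> c <= expect W psi) ->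
  c <= Fp A W x.
Proof.
move=> [psi [psi_unit psi_x]] c_le; apply: (@lb_le_inf _ (fibre_energies x)).
  by exists (expect W psi), psi.
by move=> _ [phi [phi_unit phi_x] <-]; apply: c_le.
Qed.

Lemma Fp_bounded : exists B, forall x, pure_dom A x -> - B <= Fp A W x.
Proof.
have [B B_le] := qform_unit_vec_bounded W.
by exists B => x x_pure; apply: le_Fp => // psi psi_unit _; apply: B_le.
Qed.

Lemma Fp_approx x e : pure_dom A x -> 0 < e -> exists psi,
  [/\ unit_vec psi, iota_star A (Defs.proj psi) = x & expect W psi < Fp A W x + e].
Proof.
move=> [psi [psi_unit psi_x]] e_gt0.
have energies_x : fibre_energies x !=set0 by exists (expect W psi), psi.
have Fp_lt : Fp A W x < Fp A W x + e by rewrite ltrDl.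
have [_ [phi [phi_unit phi_x] <-] phi_lt] := inf_lt energies_x Fp_lt.
by exists phi.
Qed.

End PureFunctional.

Section ConvexHull.
Variables (R : realType) (m k : nat) (X : set 'rV[R]_m) (f : 'rV[R]_m -> R).

Lemma convk_fun_le c s (t : 'I_k -> R) (x : 'I_k -> 'rV[R]_m) :
  (forall y, X y -> c <= f y) -> (forall i, X (x i)) -> (forall i, 0 <= t i) ->
  \sum_i t i = 1 -> s = \sum_i t i *: x i ->
  convk_fun k X f s <= \sum_i t i * f (x i).
Proof.
move=> c_le Xx t_ge0 t_sum1 s_def; apply: ge_inf; last by exists t, x.
exists c => _ [t' [x' [Xx' [t'_ge0 [t'_sum1 [_ ->]]]]]].
rewrite -[c]mul1r -t'_sum1 mulr_suml; apply: ler_sum => i _.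
by rewrite ler_wpM2l ?c_le.
Qed.

Lemma le_convk_fun c s : convk_dom k X s ->
  (forall (t : 'I_k -> R) (x : 'I_k -> 'rV[R]_m), (forall i, X (x i)) ->
     (forall i, 0 <= t i) -> \sum_i t i = 1 -> s = \sum_i t i *: x i ->
     c <= \sum_i t i * f (x i)) ->
  c <= convk_fun k X f s.
Proof.
move=> [t [x [Xx [t_ge0 [t_sum1 s_def]]]]] c_le; apply: lb_le_inf.
  by exists (\sum_i t i * f (x i)), t, x.
by move=> _ [t' [x' [Xx' [t'_ge0 [t'_sum1 [s_def' ->]]]]]]; apply: c_le.
Qed.

End ConvexHull.

Section Convexification.
Variables (R : realType) (n m k : nat) (A : 'I_m -> 'M[R[i]]_n) (W : 'M[R[i]]_n).

Lemma convk_pure_dom : convk_dom k (pure_dom A) = pure_dom (bar_iota k A).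
Proof.
apply/seteqP; split => s.
  move=> [t [x [x_pure [t_ge0 [t_sum1 ->]]]]].
  have /choice[phi phiP] := x_pure.
  have [Psi Psi_unit mix] := tens_mixture_glue t_ge0 t_sum1 (fun i => (phiP i).1).
  exists Psi; split => //; rewrite (tens_mixture_iota_star _ mix).
  by apply: eq_bigr => i _; rewrite (phiP i).2.
move=> [Psi [Psi_unit <-]].
have [t [phi [t_ge0 t_sum1 phi_unit mix]]] := tens_mixture_decomp Psi_unit.
exists t, (fun i => iota_star A (Defs.proj (phi i))); split; first by move=> i; exists (phi i).
by rewrite (tens_mixture_iota_star _ mix).
Qed.

Lemma convk_Fp_le_Fp_bar s : pure_dom (bar_iota k A) s ->
  convk_fun k (pure_dom A) (Fp A W) s <= Fp (bar_iota k A) (bar_W k W) s.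
Proof.
move=> s_pure; apply: le_Fp => // Psi Psi_unit Psi_s.
have [t [phi [t_ge0 t_sum1 phi_unit mix]]] := tens_mixture_decomp Psi_unit.
have [B B_le] := Fp_bounded A W.
rewrite (tens_mixture_expect _ mix).
apply: le_trans (convk_fun_le B_le _ t_ge0 t_sum1 _) _.
- by move=> i; exists (phi i).
- by rewrite -Psi_s (tens_mixture_iota_star _ mix).
by apply: ler_sum => i _; rewrite ler_wpM2l ?Fp_le_expect.
Qed.

Lemma Fp_bar_le_convk_Fp s : pure_dom (bar_iota k A) s ->
  Fp (bar_iota k A) (bar_W k W) s <= convk_fun k (pure_dom A) (Fp A W) s.
Proof.
rewrite -convk_pure_dom => s_conv.
apply: le_convk_fun => // t x x_pure t_ge0 t_sum1 s_def.
apply/ler_addgt0Pr => e e_gt0.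
have /choice[phi phiP] : forall i, exists phi, [/\ unit_vec phi,
    iota_star A (Defs.proj phi) = x i & expect W phi < Fp A W (x i) + e].
  by move=> i; exact: Fp_approx.
have phi_unit i : unit_vec (phi i) by case: (phiP i).
have [Psi Psi_unit mix] := tens_mixture_glue t_ge0 t_sum1 phi_unit.
have -> : s = iota_star (bar_iota k A) (Defs.proj Psi).
  rewrite (tens_mixture_iota_star _ mix) s_def.
  by apply: eq_bigr => i _; case: (phiP i) => _ ->.
apply: le_trans (Fp_le_expect _ _ Psi_unit) _; rewrite (tens_mixture_expect _ mix).
rewrite -[e]mul1r -t_sum1 mulr_suml -big_split /=; apply: ler_sum => i _.
by rewrite -mulrDr ler_wpM2l //; case: (phiP i) => _ _ /ltW.
Qed.

End Convexification.

Theorem proposition2p40 (R : realType) (n m k : nat)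
  (A : 'I_m -> 'M[R[i]]_n) (W : 'M[R[i]]_n)
  (hA : forall j, is_hermitian (A j)) (hW : is_hermitian W) (hk : (0 < k)%N) :
  convk_dom k (pure_dom A) = pure_dom (bar_iota k A) /\
  (forall s, pure_dom (bar_iota k A) s ->
     convk_fun k (pure_dom A) (Fp A W) s = Fp (bar_iota k A) (bar_W k W) s).
Proof.
split; first exact: convk_pure_dom.
by move=> s s_pure; apply: le_anti; rewrite convk_Fp_le_Fp_bar ?Fp_bar_le_convk_Fp.
Qed.
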